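(* Let $d,n\ge1$, $k\ge0$, and $\Sigma\in\mathbb{R}^{d\times d}$ positive definite. Let $x^{(1)},\dots,x^{(n+1)}$ be i.i.d. $\mathcal{N}(0,\Sigma)$, $w_\star\sim\mathcal{N}(0,\Sigma^{-1})$ independent, and $y^{(i)}=\langle x^{(i)},w_\star\rangle$ for $i\le n$. Let $$Z_0=\begin{bmatrix} x^{(1)} & \cdots & x^{(n)} & x^{(n+1)}\\ y^{(1)} & \cdots & y^{(n)} & 0\end{bmatrix},\qquad M=\begin{bmatrix} I_n & 0\\ 0& 0\end{bmatrix}\in\mathbb{R}^{(n+1)\times(n+1)}.$$ For $A=\{A_i\}_{i=0}^k$ with $A_i\in\mathbb{R}^{d\times d}$ symmetric, let $P_i=\begin{bmatrix}0_{d\times d}&0\\0&1\end{bmatrix}$, $Q_i=\begin{bmatrix}A_i&0\\0&0\end{bmatrix}$, $Z_{i+1}=Z_i+\frac1nP_iZ_iM(Z_i^\top Q_iZ_i)$ for $i=0,\dots,k$, and $f(A)=\mathbb{E}\big[([Z_{k+1}]_{d+1,n+1}+w_\star^\top x^{(n+1)})^2\big]$. Suppose $A_i=a_i\Sigma^{-1}$ with $a_i\in\mathbb{R}$ for all $i$. Let $i,j\in\{0,\dots,k\}$ and define $\tilde A$ by $\tilde A_i=A_j$, $\tilde A_j=A_i$, and $\tilde A_\ell=A_\ell$ for $\ell\notin\{i,j\}$. Then $f(A)=f(\tilde A)$.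
   Context: $[X]_{i,j}$ denotes the $(i,j)$ entry of a matrix; the expectation is over $x^{(1)},\dots,x^{(n+1)},w_\star$. *)

From HB Require Import structures.
From mathcomp Require Import all_boot all_order all_algebra.
From mathcomp Require Import all_classical all_reals all_analysis.
Set Implicit Arguments. Unset Strict Implicit. Unset Printing Implicit Defensive.
Import Order.TTheory GRing.Theory Num.Theory.
Local Open Scope classical_set_scope.
Local Open Scope ring_scope.

Section Defs.
Variable R : realType.

Definition posdef d (S : 'M[R]_d) : Prop :=
  S^T = S /\ forall v : 'cV[R]_d, v != 0 -> 0 < (v^T *m S *m v) 0 0.

(* Z_0 = [x^(1) .. x^(n+1) ; y^(1) .. y^(n) 0], y^(i) = <x^(i), w> ;
   X has the columns x^(1),...,x^(n+1) *)
Definition Z0mx d n (X : 'M[R]_(d, n.+1)) (w : 'cV[R]_d) : 'M[R]_(d + 1, n.+1) :=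
  col_mx X (\row_j (if (j < n)%N then (X^T *m w) j 0 else 0)).

Definition Mmask n : 'M[R]_(n.+1) :=
  \matrix_(i, j) (if (i == j) && (i < n)%N then 1 else 0).

Definition Pmx d : 'M[R]_(d + 1) := block_mx 0 0 0 1%:M.

Definition Qmx d (A : 'M[R]_d) : 'M[R]_(d + 1) := block_mx A 0 0 0.

Definition step d n (A : 'M[R]_d) (Z : 'M[R]_(d + 1, n.+1)) : 'M[R]_(d + 1, n.+1) :=
  Z + (n%:R)^-1 *: (Pmx d *m Z *m Mmask n *m (Z^T *m Qmx A *m Z)).

Definition Zfinal d n k (A : 'I_k.+1 -> 'M[R]_d) (Z0 : 'M[R]_(d + 1, n.+1)) :=
  foldl (fun Z i => step (A i) Z) Z0 (enum 'I_k.+1).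

Definition pred_err d n k (A : 'I_k.+1 -> 'M[R]_d) (X : 'M[R]_(d, n.+1)) (w : 'cV[R]_d) : R :=
  Zfinal A (Z0mx X w) (rshift d (@ord0 0)) ord_max + (w^T *m col ord_max X) 0 0.

Variables (dT : measure_display) (T : measurableType dT) (P : probability T R).

(* Joint law: the random vector (x^(1),...,x^(n+1), w) is centered Gaussian with
   block-diagonal covariance diag(Sigma,...,Sigma,Sigma^{-1}) (i.e. x^(i) iid
   N(0,Sigma), w ~ N(0,Sigma^{-1}) independent).  Stated through the standard
   definition of a Gaussian vector: every nonzero linear functional of it is a
   real normal variable with mean 0 and the corresponding variance. *)
Definition icl_gaussian d n (Sigma : 'M[R]_d)
  (X : 'I_d -> 'I_n.+1 -> {RV P >-> R}) (w : 'I_d -> {RV P >-> R}) : Prop :=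
  forall (U : 'M[R]_(d, n.+1)) (u : 'cV[R]_d), (U != 0) || (u != 0) ->
  forall B : set R, measurable B ->
  P ((fun t => \sum_(a < d) \sum_(b < n.+1) U a b * X a b t
               + \sum_(a < d) u a 0 * w a t) @^-1` B)
  = normal_prob 0
      (Num.sqrt (\sum_(b < n.+1) ((col b U)^T *m Sigma *m col b U) 0 0
                 + (u^T *m invmx Sigma *m u) 0 0)) B.

Definition risk d n k (X : 'I_d -> 'I_n.+1 -> {RV P >-> R}) (w : 'I_d -> {RV P >-> R})
  (A : 'I_k.+1 -> 'M[R]_d) : \bar R :=
  'E_P[fun t => pred_err A (\matrix_(a, b) X a b t) (\col_a w a t) ^+ 2].

End Defs.

From HB Require Import structures.
From mathcomp Require Import all_boot all_order all_algebra.
From mathcomp Require Import all_classical all_reals all_analysis.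
From mathcomp Require Import perm.
Import Order.TTheory GRing.Theory Num.Theory.
Local Open Scope classical_set_scope.
Local Open Scope ring_scope.

(* When every A_l is a scalar multiple a_l B of one matrix, the top block X of
   Z never changes and each step multiplies the bottom row on the right by
   I + (a_l / n) M (X^T B X).  These factors are polynomials in the single
   matrix M (X^T B X), so they commute and Z_{k+1} does not depend on the order
   of the a_l. *)

Section ScalarSteps.
Variables (R : realType) (d n : nat) (B : 'M[R]_d) (X : 'M[R]_(d, n.+1)).

Let G : 'M[R]_n.+1 := Mmask R n *m (X^T *m B *m X).

Lemma step_scale_col_mx (c : R) (y : 'rV[R]_n.+1) :
  step (c *: B) (col_mx X y) = col_mx X (y *m (1%:M + ((n%:R)^-1 * c) *: G)).
Proof.
rewrite /step /Pmx /Qmx mul_block_col !mul0mx !addr0 add0r mul1mx.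
rewrite tr_col_mx mul_row_block !mulmx0 !addr0 mul_row_col mul0mx addr0.
rewrite !mul_col_mx !mul0mx scale_col_mx scaler0 add_col_mx addr0.
congr col_mx; rewrite mulmxDr mulmx1; congr (_ + _).
by do 4 rewrite -?scalemxAl -?scalemxAr; rewrite ?scalerA !mulmxA.
Qed.

Lemma foldl_step_scale (I : Type) (c : I -> R) (s : seq I) (y : 'rV[R]_n.+1) :
  foldl (fun Z l => step (c l *: B) Z) (col_mx X y) s =
  col_mx X (y *m horner_mx G (\prod_(l <- s) (1 + ((n%:R)^-1 * c l) *: 'X))).
Proof.
elim: s y => [|l s IHs] y /=; first by rewrite big_nil rmorph1 mulmx1.
rewrite step_scale_col_mx IHs big_cons rmorphM -mulmxA mulmxE.
congr (col_mx _ (_ *m (_ * _))).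
by rewrite rmorphD /= linearZ /= horner_mx_X (rmorph1 (horner_mx _)).
Qed.

Lemma Zfinal_scale_perm k (c : 'I_k.+1 -> R) (s : 'S_k.+1) (y : 'rV[R]_n.+1) :
  Zfinal (fun l => c (s l) *: B) (col_mx X y) = Zfinal (fun l => c l *: B) (col_mx X y).
Proof.
rewrite /Zfinal !foldl_step_scale !big_enum /=.
by rewrite [in RHS](reindex_inj (@perm_inj _ s)).
Qed.

End ScalarSteps.

Lemma swap_tpermE (I : finType) (U : Type) (f : I -> U) (i j : I) :
  (fun l => if l == i then f j else if l == j then f i else f l) = f \o tperm i j.
Proof.
apply: funext => l /=.
case: tpermP => [->|->|/eqP/negbTE -> /eqP/negbTE ->]; rewrite ?eqxx //.
by case: eqP => // ->.
Qed.

Theorem lemma4 (R : realType) (dT : measure_display) (T : measurableType dT)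
  (P : probability T R) (d n k : nat) (Sigma : 'M[R]_d)
  (X : 'I_d -> 'I_n.+1 -> {RV P >-> R}) (w : 'I_d -> {RV P >-> R}) :
  (0 < d)%N -> (0 < n)%N -> posdef Sigma -> icl_gaussian Sigma X w ->
  forall (a : 'I_k.+1 -> R) (i j : 'I_k.+1),
  let A := fun l : 'I_k.+1 => a l *: invmx Sigma in
  let At := fun l : 'I_k.+1 => if l == i then A j else if l == j then A i else A l in
  risk X w A = risk X w At.
Proof.
move=> _ _ _ _ a i j A At.
have -> : At = A \o tperm i j by exact: swap_tpermE.
rewrite /risk; congr (expectation _ _); apply: funext => t.
rewrite /pred_err /Z0mx /A /=.
by rewrite (Zfinal_scale_perm _ _ _ (invmx Sigma) _ _ a (tperm i j)).
Qed.
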